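(* Let $\{\triangleright, ;\}\subseteq\sigma\subseteq\{\triangleright, ;, \wedge, \mathrm{upd}, \sqcup, \mathsf{D}, \mathsf{A}\}$ and let $\mathcal{A}$ be a $\sigma$-algebra that is representable by partial functions and whose atoms are separating. Write $\mathrm{At}(\mathcal{A})$ for its set of atoms, and define $a\sim b$ iff $a\lhd b = b$ and $b\lhd a = a$ (an equivalence relation). If $\mathsf{D},\mathsf{A}\notin\sigma$, for each $a\in\mathcal{A}$ let $\theta(a)$ be the partial function on the disjoint union $\mathrm{At}(\mathcal{A}) \amalg (\mathrm{At}(\mathcal{A})/{\sim})$ given, for $x\in\mathrm{At}(\mathcal{A})$, by $\theta(a)(x) = x;a$ if $x;a\neq 0$ (undefined otherwise) and $\theta(a)(x/{\sim}) = x\lhd a$ if $x\lhd a\ne 0$ (undefined otherwise). If $\mathsf{D}\in\sigma$ or $\mathsf{A}\in\sigma$, let instead $\theta(a)$ be the partial function on $\mathrm{At}(\mathcal{A})$ given by $\theta(a)(x)=x;a$ if $x;a\ne0$ and undefined otherwise. Then $\theta$ is well defined (its values are atoms, and the second component does not depend on the choice of representative of $x/{\sim}$) and is a representation of $\mathcal{A}$ by partial functions. Moreover: (1) if composition in $\mathcal{A}$ is completely left-distributive over joins, then $\theta$ is join complete; (2) if composition in $\mathcal{A}$ is completely left-distributive over meets, then $\theta$ is meet complete.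
   Context: The operations are interpreted on partial functions on a base set $X$ as: $f \triangleright g = \{(x,y) \in g : x \notin \mathrm{dom}(f)\}$; $f;g=\{(x,z):\exists y\,((x,y)\in f,(y,z)\in g)\}$; $f\wedge g = f\cap g$; $\mathrm{upd}(f,g)(x)$ is $f(x)$ if $f(x)$ defined and $g(x)$ undefined, $g(x)$ if both defined, undefined otherwise; $(f\sqcup g)(x)$ is $f(x)$ if defined, else $g(x)$; $\mathsf{D}(f)$ = identity on $\mathrm{dom}(f)$; $\mathsf{A}(f)$ = identity on $X\setminus\mathrm{dom}(f)$. A representation by partial functions is an isomorphism onto a $\sigma$-algebra of partial functions with these operations. Define $0 := a\triangleright a$, $a\lhd b := (a\triangleright b)\triangleright b$, $a \le b :\iff a\lhd b = a$; for representable algebras this is a partial order with least element $0$. An atom is a minimal nonzero element; atoms are separating if whenever $a\not\le b$ there is an atom $c\le a$ with $c\not\le b$. Composition is completely left-distributive over joins if for all $S$ with $\bigvee S$ existing and all $a$, $\bigvee\{a;s:s\in S\}$ exists and equals $a;\bigvee S$; over meets, the same with nonempty $S$ and meets. $\theta$ is join complete if $\theta(\bigvee S)=\bigcup\theta[S]$ whenever $\bigvee S$ exists; meet complete if $\theta(\bigwedge S)=\bigcap\theta[S]$ whenever $S\ne\emptyset$ and $\bigwedge S$ exists. *)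

From Stdlib Require Import Classical ClassicalEpsilon RelationClasses.

Unset Implicit Arguments.

Inductive sym := Prec | Comp | Meet | Upd | Join | Dom | Antidom.

(** An algebra carrying all seven operations; a σ-algebra (σ : sym -> Prop)
    is such an algebra in which only the operations in σ are meaningful
    (the others are arbitrary and are ignored by all notions below). *)
Record alg := Alg {
  car : Type;
  prec : car -> car -> car;
  comp : car -> car -> car;
  meet : car -> car -> car;
  upd  : car -> car -> car;
  join : car -> car -> car;
  dom  : car -> car;
  antidom : car -> car
}.
Arguments prec {a}. Arguments comp {a}. Arguments meet {a}. Arguments upd {a}.
Arguments join {a}. Arguments dom {a}. Arguments antidom {a}.

Definition pf (X : Type) := X -> option X.

Definition pf_prec {X} (f g : pf X) : pf X :=
  fun x => match f x with Some _ => None | None => g x end.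
Definition pf_comp {X} (f g : pf X) : pf X :=
  fun x => match f x with Some y => g y | None => None end.
Definition pf_meet {X} (f g : pf X) : pf X :=
  fun x => match f x, g x with
           | Some y, Some z => if excluded_middle_informative (y = z) then Some y else None
           | _, _ => None end.
Definition pf_upd {X} (f g : pf X) : pf X :=
  fun x => match f x, g x with
           | Some _, Some z => Some z
           | Some y, None => Some y
           | None, _ => None end.
Definition pf_join {X} (f g : pf X) : pf X :=
  fun x => match f x with Some y => Some y | None => g x end.
Definition pf_dom {X} (f : pf X) : pf X :=
  fun x => match f x with Some _ => Some x | None => None end.
Definition pf_antidom {X} (f : pf X) : pf X :=
  fun x => match f x with Some _ => None | None => Some x end.

Definition is_rep (A : alg) (sigma : sym -> Prop) (X : Type) (th : car A -> pf X) : Prop :=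
  (forall a b, (forall x, th a x = th b x) -> a = b) /\
  (sigma Prec -> forall a b x, th (prec a b) x = pf_prec (th a) (th b) x) /\
  (sigma Comp -> forall a b x, th (comp a b) x = pf_comp (th a) (th b) x) /\
  (sigma Meet -> forall a b x, th (meet a b) x = pf_meet (th a) (th b) x) /\
  (sigma Upd -> forall a b x, th (upd a b) x = pf_upd (th a) (th b) x) /\
  (sigma Join -> forall a b x, th (join a b) x = pf_join (th a) (th b) x) /\
  (sigma Dom -> forall a x, th (dom a) x = pf_dom (th a) x) /\
  (sigma Antidom -> forall a x, th (antidom a) x = pf_antidom (th a) x).

Definition representable (A : alg) (sigma : sym -> Prop) : Prop :=
  exists (X : Type) (th : car A -> pf X), is_rep A sigma X th.

Section Order.
Variable A : alg.

(** a ◁ b := (a ▷ b) ▷ b ;  a ≤ b :<-> a ◁ b = a.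
    0 := a ▷ a (for representable algebras this does not depend on a). *)
Definition lhd (a b : car A) : car A := prec (prec a b) b.
Definition le (a b : car A) : Prop := lhd a b = a.

Definition is_zero (z : car A) : Prop := z = prec z z.

Definition atom (x : car A) : Prop :=
  ~ is_zero x /\ forall y, ~ is_zero y -> le y x -> y = x.

Definition atoms_separating : Prop :=
  forall a b, ~ le a b -> exists c, atom c /\ le c a /\ ~ le c b.

Definition sim (a b : car A) : Prop := lhd a b = b /\ lhd b a = a.

Definition is_join (S : car A -> Prop) (j : car A) : Prop :=
  (forall s, S s -> le s j) /\ (forall u, (forall s, S s -> le s u) -> le j u).
Definition is_meet (S : car A -> Prop) (m : car A) : Prop :=
  (forall s, S s -> le m s) /\ (forall u, (forall s, S s -> le u s) -> le u m).

Definition img (a : car A) (S : car A -> Prop) : car A -> Prop :=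
  fun t => exists s, S s /\ t = comp a s.

Definition comp_cld_joins : Prop :=
  forall (S : car A -> Prop) j a, is_join S j -> is_join (img a S) (comp a j).
Definition comp_cld_meets : Prop :=
  forall (S : car A -> Prop) m a, (exists s, S s) -> is_meet S m ->
    is_meet (img a S) (comp a m).

Definition join_complete {X : Type} (th : car A -> pf X) : Prop :=
  forall (S : car A -> Prop) j, is_join S j ->
    forall x y, th j x = Some y <-> exists s, S s /\ th s x = Some y.
Definition meet_complete {X : Type} (th : car A -> pf X) : Prop :=
  forall (S : car A -> Prop) m, (exists s, S s) -> is_meet S m ->
    forall x y, th m x = Some y <-> forall s, S s -> th s x = Some y.

Definition At : Type := { x : car A | atom x }.
(** At(A)/~ : the ~-classes of atoms, as predicates. *)
Definition AtQ : Type :=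
  { C : car A -> Prop | exists x, atom x /\ forall y, C y <-> (atom y /\ sim x y) }.

Definition rep (C : AtQ) : car A :=
  proj1_sig (constructive_indefinite_description _ (proj2_sig C)).

(** Partial atom-valued map: u ↦ u if u is an atom, undefined otherwise
    (for the values used below, which are atoms or 0, this is
    "defined iff u ≠ 0"). *)
Definition as_atom (u : car A) : option At :=
  match excluded_middle_informative (atom u) with
  | left p => Some (exist (fun x => atom x) u p)
  | right _ => None
  end.

Definition opt_map {U V : Type} (f : U -> V) (o : option U) : option V :=
  match o with Some u => Some (f u) | None => None end.

(** θ when D, A ∉ σ : base set At(A) ⊔ At(A)/~ . *)
Definition theta1 (a : car A) : pf (At + AtQ) :=
  fun p => match p with
           | inl x => opt_map inl (as_atom (comp (proj1_sig x) a))
           | inr C => opt_map inl (as_atom (lhd (rep C) a))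
           end.

(** θ when D ∈ σ or A ∈ σ : base set At(A). *)
Definition theta2 (a : car A) : pf At :=
  fun x => as_atom (comp (proj1_sig x) a).

End Order.

From Stdlib Require Import Classical ClassicalEpsilon RelationClasses.

(** Fix any representation [th] of the {▷, ;}-reduct of [A] by partial
    functions on a set [X].  Through [th], [0] is the empty function,
    [a ◁ b] is [b] restricted to the domain of [a], [≤] is inclusion of
    graphs and [a ~ b] means that [a] and [b] have the same domain.

    The heart of the proof is the notion of a _localization_ at an atom [x]:
    a map [T] with [th (T a) = g ; th a] for a partial function [g] with the
    same domain as [th x].  Then [T a] is [0] or an atom, [th a] is defined
    either everywhere or nowhere on the range of [g], and [T a] only depends
    on [th a] restricted to that range.  Consequently the partial atom-valued
    map [a ↦ T a] commutes with each operation of the signature exactly as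
    evaluation at a point does.  Both [a ↦ x;a] and [a ↦ x ◁ a] are
    localizations, so [θ] (for either choice of base set) is a homomorphism.
    Injectivity comes from separation by atoms: an atom [c ≤ a] with [c ≰ b]
    gives [c ◁ a = c ≠ c ◁ b].  Complete left-distributivity makes a nonzero
    [x;⋁S] be witnessed by some [s ∈ S], and a common value of the [x;s] be
    the value of [x;⋀S]; this yields join and meet completeness. *)

Section Atoms.
Variable A : alg.

Lemma At_eq (w1 w2 : At A) : proj1_sig w1 = proj1_sig w2 -> w1 = w2.
Proof.
  destruct w1 as [v1 h1], w2 as [v2 h2]; simpl; intros <-.
  f_equal; apply proof_irrelevance.
Qed.

Lemma as_atom_self (w : At A) : as_atom A (proj1_sig w) = Some w.
Proof.
  unfold as_atom; destruct (excluded_middle_informative _) as [h | h].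
  - f_equal; apply At_eq; reflexivity.
  - destruct w; contradiction.
Qed.

Lemma as_atom_zero v : is_zero A v -> as_atom A v = None.
Proof.
  intro Hz; unfold as_atom.
  destruct (excluded_middle_informative (atom A v)) as [h | _]; [| reflexivity].
  exfalso; exact (proj1 h Hz).
Qed.

Lemma as_atom_Some v w : as_atom A v = Some w -> atom A v /\ proj1_sig w = v.
Proof.
  unfold as_atom; destruct (excluded_middle_informative (atom A v)) as [h | h]; [| discriminate].
  intros E; inversion E; split; [exact h | reflexivity].
Qed.

Lemma lhd_atom_separates c a b :
  atom A c -> le A c a -> ~ le A c b -> as_atom A (lhd A c a) <> as_atom A (lhd A c b).
Proof.
  intros Hc Hca Hcb E.
  unfold le in Hca; rewrite Hca in E.
  pose proof (as_atom_self (exist _ c Hc)) as Hself; simpl in Hself; rewrite Hself in E.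
  destruct (as_atom_Some _ _ (eq_sym E)) as [_ Ec].
  apply Hcb; exact (eq_sym Ec).
Qed.

(** The two order-theoretic consequences of complete left-distributivity that
    the completeness proofs use, stated for an arbitrary map [T]. *)
Definition reflects_nonzero_joins (T : car A -> car A) : Prop :=
  forall S j, is_join A S j -> ~ is_zero A (T j) -> exists s, S s /\ ~ is_zero A (T s).
Definition preserves_constant_meets (T : car A -> car A) : Prop :=
  forall S m, (exists s, S s) -> is_meet A S m ->
    forall v, (forall s, S s -> T s = v) -> T m = v.

End Atoms.

Section Representation.
Variables (A : alg) (X : Type) (th : car A -> pf X).
Hypothesis th_inj : forall a b, (forall p, th a p = th b p) -> a = b.
Hypothesis th_prec : forall a b p, th (prec a b) p = pf_prec (th a) (th b) p.
Hypothesis th_comp : forall a b p, th (comp a b) p = pf_comp (th a) (th b) p.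

Lemma zero_iff z : is_zero A z <-> forall p, th z p = None.
Proof.
  unfold is_zero; split.
  - intros Hz p; destruct (th z p) eqn:E; [| reflexivity].
    pose proof (th_prec z z p) as Hp; rewrite <- Hz in Hp.
    unfold pf_prec in Hp; rewrite E in Hp; congruence.
  - intros H; apply th_inj; intros p.
    rewrite th_prec; unfold pf_prec; rewrite H; reflexivity.
Qed.

Lemma lhd_th a b p :
  th (lhd A a b) p = match th a p with Some _ => th b p | None => None end.
Proof.
  unfold lhd; rewrite !th_prec; unfold pf_prec; rewrite th_prec; unfold pf_prec.
  destruct (th a p); [| destruct (th b p)]; reflexivity.
Qed.

Lemma le_iff a b : le A a b <-> (forall p y, th a p = Some y -> th b p = Some y).
Proof.
  unfold le; split.
  - intros H p y Hy; pose proof (lhd_th a b p) as E.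
    rewrite H, Hy in E; congruence.
  - intros H; apply th_inj; intros p; rewrite lhd_th.
    destruct (th a p) eqn:E; [exact (H _ _ E) | reflexivity].
Qed.

Lemma le_antisym a b : le A a b -> le A b a -> a = b.
Proof.
  rewrite !le_iff; intros Hab Hba; apply th_inj; intros p.
  destruct (th a p) eqn:Ea; [rewrite (Hab _ _ Ea); reflexivity |].
  destruct (th b p) eqn:Eb; [| reflexivity].
  rewrite (Hba _ _ Eb) in Ea; discriminate.
Qed.

Lemma sim_iff a b : sim A a b <-> forall p, (th a p = None <-> th b p = None).
Proof.
  unfold sim; split.
  - intros [H1 H2] p; split; intro E.
    + rewrite <- H1, lhd_th, E; reflexivity.
    + rewrite <- H2, lhd_th, E; reflexivity.
  - intros H; split; apply th_inj; intro p; rewrite lhd_th.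
    + destruct (th a p) eqn:E; [reflexivity | symmetry; apply H; exact E].
    + destruct (th b p) eqn:E; [reflexivity | symmetry; apply H; exact E].
Qed.

Lemma sim_equiv : Equivalence (sim A).
Proof.
  split.
  - intro a; apply sim_iff; tauto.
  - intros a b H; rewrite sim_iff in *; intro p; specialize (H p); tauto.
  - intros a b c H1 H2; rewrite sim_iff in *; intro p.
    specialize (H1 p); specialize (H2 p); tauto.
Qed.

Lemma lhd_sim x y : sim A x y -> forall a, lhd A x a = lhd A y a.
Proof.
  rewrite sim_iff; intros H a; apply th_inj; intro p; rewrite !lhd_th.
  specialize (H p); destruct (th x p), (th y p); try reflexivity;
    exfalso; destruct H as [H1 H2]; [specialize (H2 eq_refl) | specialize (H1 eq_refl)]; discriminate.
Qed.

(** A nonzero element whose domain lies inside the domain of an atom [x]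
    has the whole domain of [x]: otherwise [u ◁ x] would lie strictly below [x]. *)
Lemma atom_domain_minimal x u :
  atom A x -> ~ is_zero A u -> (forall p, th u p <> None -> th x p <> None) ->
  forall p, th x p <> None -> th u p <> None.
Proof.
  intros [_ Hmin] Hu Hsub.
  assert (Hux : lhd A u x = x).
  { apply Hmin.
    - intro Hz; apply Hu; apply zero_iff; intro p.
      rewrite zero_iff in Hz; specialize (Hz p); rewrite lhd_th in Hz.
      destruct (th u p) eqn:Eu; [| reflexivity].
      exfalso; apply (Hsub p); [rewrite Eu; discriminate | exact Hz].
    - apply le_iff; intros p y; rewrite lhd_th; destruct (th u p); [auto | discriminate]. }
  intros p Hp Hn; apply Hp; rewrite <- Hux, lhd_th, Hn; reflexivity.
Qed.

Lemma atom_of_subdomain x v :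
  atom A x -> ~ is_zero A v -> (forall p, th v p <> None -> th x p <> None) -> atom A v.
Proof.
  intros Hx Hv Hvx; split; [exact Hv |]; intros y Hy Hyv.
  pose proof (proj1 (le_iff y v) Hyv) as Hgraph.
  assert (Hyx : forall p, th x p <> None -> th y p <> None).
  { apply (atom_domain_minimal x y Hx Hy); intros p Hp; apply Hvx.
    destruct (th y p) eqn:E; [rewrite (Hgraph _ _ E); discriminate | congruence]. }
  apply th_inj; intros p; destruct (th y p) eqn:E; [rewrite (Hgraph _ _ E); reflexivity |].
  destruct (th v p) eqn:Ev; [| reflexivity].
  exfalso; apply (Hyx p); [apply Hvx; rewrite Ev; discriminate | exact E].
Qed.

Lemma meet_le (th_meet : forall a b p, th (meet a b) p = pf_meet (th a) (th b) p) a b :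
  le A (meet a b) a /\ le A (meet a b) b.
Proof.
  split; apply le_iff; intros p y; rewrite th_meet; unfold pf_meet;
    destruct (th a p) as [c |], (th b p) as [d |]; try discriminate;
    destruct (excluded_middle_informative (c = d)); congruence.
Qed.

Definition localization (T : car A -> car A) : Prop :=
  exists x (g : pf X), atom A x /\ (forall p, g p <> None <-> th x p <> None) /\
    forall a p, th (T a) p = pf_comp g (th a) p.

(** The identity on the domain of [u]; [u ◁ a] is [dom_id u ; th a]. *)
Definition dom_id (u : car A) : pf X :=
  fun p => match th u p with Some _ => Some p | None => None end.

Lemma comp_localization x : atom A x -> localization (comp x).
Proof. intros Hx; exists x, (th x); split; [exact Hx | split; [tauto | apply th_comp]]. Qed.

Lemma lhd_localization u : atom A u -> localization (lhd A u).
Proof.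
  intros Hu; exists u, (dom_id u); split; [exact Hu | split].
  - intro p; unfold dom_id; destruct (th u p); split; congruence.
  - intros a p; rewrite lhd_th; unfold pf_comp, dom_id; destruct (th u p); reflexivity.
Qed.

Section Localization.
Variables (T : car A -> car A) (x : car A) (g : pf X).
Hypothesis x_atom : atom A x.
Hypothesis g_dom : forall p, g p <> None <-> th x p <> None.
Hypothesis T_def : forall a p, th (T a) p = pf_comp g (th a) p.

Local Notation val a := (as_atom A (T a)).
Local Notation "'on_range' q , P" := (forall p q, g p = Some q -> P)
  (at level 200, q name, P at level 200).

Lemma loc_dom a p : th (T a) p <> None -> th x p <> None.
Proof. rewrite T_def; unfold pf_comp; intro H; apply g_dom; destruct (g p); congruence. Qed.

Lemma loc_atom a : ~ is_zero A (T a) -> atom A (T a).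
Proof. intro H; exact (atom_of_subdomain x (T a) x_atom H (loc_dom a)). Qed.

Lemma loc_total a : ~ is_zero A (T a) -> (on_range q, th a q <> None).
Proof.
  intros H p q Hq.
  assert (Hx : th x p <> None) by (apply g_dom; congruence).
  pose proof (atom_domain_minimal x (T a) x_atom H (loc_dom a) p Hx) as D.
  rewrite T_def in D; unfold pf_comp in D; rewrite Hq in D; exact D.
Qed.

Lemma loc_zero a : is_zero A (T a) -> (on_range q, th a q = None).
Proof.
  intros H p q Hq; rewrite zero_iff in H; specialize (H p).
  rewrite T_def in H; unfold pf_comp in H; rewrite Hq in H; exact H.
Qed.

Lemma loc_zero_of a : (on_range q, th a q = None) -> is_zero A (T a).
Proof.
  intro H; apply zero_iff; intro p; rewrite T_def; unfold pf_comp.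
  destruct (g p) eqn:E; [exact (H p _ E) | reflexivity].
Qed.

Lemma loc_ext a b : (on_range q, th a q = th b q) -> T a = T b.
Proof.
  intros H; apply th_inj; intro p; rewrite !T_def; unfold pf_comp.
  destruct (g p) eqn:E; [exact (H p _ E) | reflexivity].
Qed.

Lemma loc_eq_agree a b : T a = T b -> (on_range q, th a q = th b q).
Proof.
  intros E p q Hq; pose proof (f_equal (fun t => th t p) E) as F; simpl in F.
  rewrite !T_def in F; unfold pf_comp in F; rewrite Hq in F; exact F.
Qed.

Lemma loc_mono a b : le A a b -> le A (T a) (T b).
Proof.
  rewrite !le_iff; intros H p y; rewrite !T_def; unfold pf_comp.
  destruct (g p); [apply H | discriminate].
Qed.

(** Comparable values of [T] coincide once the smaller is nonzero: values are atoms. *)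
Lemma loc_le_eq a b : le A (T a) (T b) -> ~ is_zero A (T a) -> T a = T b.
Proof.
  intros Hle Hz.
  assert (Hb : ~ is_zero A (T b)).
  { intro Hb; apply Hz; apply zero_iff; intro p.
    destruct (th (T a) p) eqn:E; [| reflexivity].
    rewrite le_iff in Hle; apply Hle in E; rewrite zero_iff in Hb; congruence. }
  exact (proj2 (loc_atom b Hb) _ Hz Hle).
Qed.

Lemma val_None a : val a = None -> (on_range q, th a q = None).
Proof.
  intros H; destruct (classic (is_zero A (T a))) as [Hz | Hz]; [exact (loc_zero a Hz) |].
  pose proof (as_atom_self A (exist _ (T a) (loc_atom a Hz))) as E; simpl in E; congruence.
Qed.

Lemma val_Some a w : val a = Some w -> proj1_sig w = T a /\ (on_range q, th a q <> None).
Proof.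
  intros H; destruct (as_atom_Some _ _ _ H) as [[Hnz _] E].
  split; [exact E | exact (loc_total a Hnz)].
Qed.

Lemma val_agree a b : (on_range q, th a q = th b q) -> val a = val b.
Proof. intros H; f_equal; exact (loc_ext a b H). Qed.

Lemma val_undef a : (on_range q, th a q = None) -> val a = None.
Proof. intros H; apply as_atom_zero; exact (loc_zero_of a H). Qed.

Lemma val_prec a b : val (prec a b) = match val a with Some _ => None | None => val b end.
Proof.
  destruct (val a) as [w |] eqn:Ea.
  - apply val_undef; intros p q Hq; rewrite th_prec; unfold pf_prec.
    destruct (th a q) eqn:E; [reflexivity |].
    exfalso; exact (proj2 (val_Some a w Ea) p q Hq E).
  - apply val_agree; intros p q Hq; rewrite th_prec; unfold pf_prec.
    rewrite (val_None a Ea p q Hq); reflexivity.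
Qed.

Lemma val_comp a b :
  val (comp a b) = match val a with Some w => as_atom A (comp (proj1_sig w) b) | None => None end.
Proof.
  destruct (val a) as [w |] eqn:Ea.
  - rewrite (proj1 (val_Some a w Ea)); f_equal.
    apply th_inj; intro p; rewrite T_def, !th_comp; unfold pf_comp.
    rewrite T_def; unfold pf_comp; destruct (g p); [rewrite th_comp |]; reflexivity.
  - apply val_undef; intros p q Hq; rewrite th_comp; unfold pf_comp.
    rewrite (val_None a Ea p q Hq); reflexivity.
Qed.

Lemma val_join (th_join : forall a b p, th (join a b) p = pf_join (th a) (th b) p) a b :
  val (join a b) = match val a with Some w => Some w | None => val b end.
Proof.
  destruct (val a) as [w |] eqn:Ea.
  - rewrite <- Ea; apply val_agree; intros p q Hq; rewrite th_join; unfold pf_join.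
    destruct (th a q) eqn:E; [reflexivity |].
    exfalso; exact (proj2 (val_Some a w Ea) p q Hq E).
  - apply val_agree; intros p q Hq; rewrite th_join; unfold pf_join.
    rewrite (val_None a Ea p q Hq); reflexivity.
Qed.

Lemma val_upd (th_upd : forall a b p, th (upd a b) p = pf_upd (th a) (th b) p) a b :
  val (upd a b) = match val a, val b with
                  | Some _, Some z => Some z | Some y, None => Some y | None, _ => None end.
Proof.
  destruct (val a) as [w1 |] eqn:Ea; [destruct (val b) as [w2 |] eqn:Eb |].
  - rewrite <- Eb; apply val_agree; intros p q Hq; rewrite th_upd; unfold pf_upd.
    pose proof (proj2 (val_Some a w1 Ea) p q Hq); pose proof (proj2 (val_Some b w2 Eb) p q Hq).
    destruct (th a q), (th b q); simpl; congruence.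
  - rewrite <- Ea; apply val_agree; intros p q Hq; rewrite th_upd; unfold pf_upd.
    rewrite (val_None b Eb p q Hq); destruct (th a q); reflexivity.
  - apply val_undef; intros p q Hq; rewrite th_upd; unfold pf_upd.
    rewrite (val_None a Ea p q Hq); reflexivity.
Qed.

Lemma val_meet (th_meet : forall a b p, th (meet a b) p = pf_meet (th a) (th b) p) a b :
  val (meet a b) = match val a, val b with
                   | Some y, Some z => if excluded_middle_informative (y = z) then Some y else None
                   | _, _ => None end.
Proof.
  destruct (val a) as [w1 |] eqn:Ea; [destruct (val b) as [w2 |] eqn:Eb |].
  - destruct (excluded_middle_informative (w1 = w2)) as [<- | Hne].
    +
      assert (Hab : on_range q, th a q = th b q).
      { apply loc_eq_agree; rewrite <- (proj1 (val_Some a w1 Ea)); exact (proj1 (val_Some b w1 Eb)). }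
      rewrite <- Ea; apply val_agree; intros p q Hq; rewrite th_meet; unfold pf_meet.
      rewrite <- (Hab p q Hq); destruct (th a q) as [c |]; [| reflexivity].
      destruct (excluded_middle_informative (c = c)); congruence.
    + (* different values: a nonzero [T (a ∧ b)] would equal both *)
      destruct (val (meet a b)) as [w |] eqn:Em; [exfalso | reflexivity].
      destruct (as_atom_Some _ _ _ Em) as [[Hnz _] _].
      destruct (meet_le th_meet a b) as [Ha Hb].
      pose proof (loc_le_eq _ _ (loc_mono _ _ Ha) Hnz) as Ma.
      pose proof (loc_le_eq _ _ (loc_mono _ _ Hb) Hnz) as Mb.
      apply Hne, At_eq; rewrite (proj1 (val_Some a w1 Ea)), (proj1 (val_Some b w2 Eb)); congruence.
  - apply val_undef; intros p q Hq; rewrite th_meet; unfold pf_meet.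
    rewrite (val_None b Eb p q Hq); destruct (th a q); reflexivity.
  - apply val_undef; intros p q Hq; rewrite th_meet; unfold pf_meet.
    rewrite (val_None a Ea p q Hq); reflexivity.
Qed.

Lemma val_join_complete (T_joins : reflects_nonzero_joins A T) S j : is_join A S j ->
  forall w, val j = Some w <-> exists s, S s /\ val s = Some w.
Proof.
  intros Hj w; pose proof (proj1 Hj) as Hub; split.
  - intro H; destruct (as_atom_Some _ _ _ H) as [[Hz _] _].
    destruct (T_joins S j Hj Hz) as [s [Hs Hsz]]; exists s; split; [exact Hs |].
    rewrite (loc_le_eq s j (loc_mono _ _ (Hub s Hs)) Hsz); exact H.
  - intros [s [Hs H]]; destruct (as_atom_Some _ _ _ H) as [[Hz _] _].
    rewrite <- (loc_le_eq s j (loc_mono _ _ (Hub s Hs)) Hz); exact H.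
Qed.

Lemma val_meet_complete (T_meets : preserves_constant_meets A T) S m :
  (exists s, S s) -> is_meet A S m ->
  forall w, val m = Some w <-> forall s, S s -> val s = Some w.
Proof.
  intros Hne Hm w; split.
  - intros H s Hs; destruct (as_atom_Some _ _ _ H) as [[Hz _] _].
    rewrite <- (loc_le_eq m s (loc_mono _ _ (proj1 Hm s Hs)) Hz); exact H.
  - intro H; destruct Hne as [s0 Hs0].
    assert (E : T m = T s0).
    { apply (T_meets S m (ex_intro _ s0 Hs0) Hm); intros s Hs.
      rewrite <- (proj1 (val_Some s w (H s Hs))); exact (proj1 (val_Some s0 w (H s0 Hs0))). }
    rewrite E; exact (H s0 Hs0).
Qed.

End Localization.

Lemma localization_atom_or_zero T : localization T ->
  forall a, is_zero A (T a) \/ atom A (T a).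
Proof.
  intros [x [g [Hx [Hg HT]]]] a.
  destruct (classic (is_zero A (T a))) as [Hz | Hz]; [left; exact Hz | right].
  exact (loc_atom T x g Hx Hg HT a Hz).
Qed.

Lemma comp_reflects_nonzero_joins x : comp_cld_joins A -> reflects_nonzero_joins A (comp x).
Proof.
  intros Hcld S j Hj Hz; apply NNPP; intro Hn; apply Hz.
  assert (Hle : le A (comp x j) (prec x x)).
  { apply (proj2 (Hcld S j x Hj)); intros t [s [Hs ->]].
    apply le_iff; intros p y Hp; exfalso; apply Hn; exists s; split; [exact Hs |].
    rewrite zero_iff; intro H; rewrite H in Hp; discriminate. }
  apply zero_iff; intro p; destruct (th (comp x j) p) eqn:E; [| reflexivity].
  rewrite le_iff in Hle; apply Hle in E; rewrite th_prec in E; unfold pf_prec in E.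
  destruct (th x p); congruence.
Qed.

Lemma lhd_reflects_nonzero_joins u : reflects_nonzero_joins A (lhd A u).
Proof.
  intros S j [Hub Hlub] Hz; apply NNPP; intro Hn; apply Hz.
  assert (Hoff : forall s, S s -> forall p, th u p <> None -> th s p = None).
  { intros s Hs p Hu; destruct (th s p) eqn:E; [| reflexivity].
    exfalso; apply Hn; exists s; split; [exact Hs |].
    rewrite zero_iff; intro H; specialize (H p); rewrite lhd_th in H.
    destruct (th u p); congruence. }
  assert (Hle : le A j (prec u j)).
  { apply Hlub; intros s Hs; apply le_iff; intros p y Hp; rewrite th_prec; unfold pf_prec.
    destruct (th u p) eqn:Eu.
    - rewrite (Hoff s Hs p) in Hp; [discriminate | congruence].
    - exact (proj1 (le_iff s j) (Hub s Hs) p y Hp). }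
  apply zero_iff; intro p; rewrite lhd_th; destruct (th u p) eqn:Eu; [| reflexivity].
  destruct (th j p) eqn:Ej; [| reflexivity].
  rewrite le_iff in Hle; apply Hle in Ej; rewrite th_prec in Ej; unfold pf_prec in Ej.
  rewrite Eu in Ej; discriminate.
Qed.

Lemma comp_preserves_constant_meets x : comp_cld_meets A -> preserves_constant_meets A (comp x).
Proof.
  intros Hcld S m [s0 Hs0] Hm v Hv.
  destruct (Hcld S m x (ex_intro _ s0 Hs0) Hm) as [Hlb Hglb]; apply le_antisym.
  - rewrite <- (Hv s0 Hs0); apply Hlb; exists s0; split; [exact Hs0 | reflexivity].
  - apply Hglb; intros t [s [Hs ->]]; rewrite (Hv s Hs); apply le_iff; auto.
Qed.

Lemma lhd_preserves_constant_meets u : preserves_constant_meets A (lhd A u).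
Proof.
  intros S m [s0 Hs0] [Hlb Hglb] v Hv.
  assert (Hvm : le A v m).
  { apply Hglb; intros s Hs; rewrite <- (Hv s Hs); apply le_iff; intros p y.
    rewrite lhd_th; destruct (th u p); [auto | discriminate]. }
  apply le_antisym; apply le_iff; intros p y.
  - rewrite <- (Hv s0 Hs0), !lhd_th; destruct (th u p); [| discriminate].
    apply (proj1 (le_iff _ _) (Hlb s0 Hs0)).
  - intros Hp; rewrite lhd_th; pose proof Hp as Hp'; rewrite <- (Hv s0 Hs0), lhd_th in Hp'.
    destruct (th u p); [exact (proj1 (le_iff _ _) Hvm p y Hp) | discriminate].
Qed.

Lemma separation_injective {Y Z : Type} (f : car A -> Y -> option Z) :
  atoms_separating A ->
  (forall c, atom A c -> exists y, forall a b,
      f a y = f b y -> as_atom A (lhd A c a) = as_atom A (lhd A c b)) ->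
  forall a b, (forall y, f a y = f b y) -> a = b.
Proof.
  intros Hsep Hdet a b Hf; apply NNPP; intro Hne.
  destruct (classic (le A a b)) as [Hab | Hab]; [destruct (classic (le A b a)) as [Hba | Hba] |].
  - exact (Hne (le_antisym a b Hab Hba)).
  - destruct (Hsep b a Hba) as [c [Hc [Hcb Hca]]]; destruct (Hdet c Hc) as [y Hy].
    exact (lhd_atom_separates A c b a Hc Hcb Hca (Hy b a (eq_sym (Hf y)))).
  - destruct (Hsep a b Hab) as [c [Hc [Hca Hcb]]]; destruct (Hdet c Hc) as [y Hy].
    exact (lhd_atom_separates A c a b Hc Hca Hcb (Hy a b (Hf y))).
Qed.

(** ** Maps built pointwise from localizations

    Both versions of [θ] have the form [θ a p = emb (L p a)], where each
    [L p] is a localization, [emb] embeds atoms into the base set, and at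
    the image [emb w] of an atom the localization is [w ; _]. *)
Section Pointwise.
Variables (Y : Type) (emb : At A -> Y) (L : Y -> car A -> car A) (theta : car A -> pf Y).
Hypothesis emb_inj : forall w1 w2, emb w1 = emb w2 -> w1 = w2.
Hypothesis L_loc : forall p, localization (L p).
Hypothesis L_emb : forall w a, L (emb w) a = comp (proj1_sig w) a.
Hypothesis theta_def : forall a p, theta a p = opt_map emb (as_atom A (L p a)).

Lemma pointwise_prec a b p : theta (prec a b) p = pf_prec (theta a) (theta b) p.
Proof.
  destruct (L_loc p) as [x [g [Hx [Hg HT]]]]; unfold pf_prec.
  rewrite !theta_def, (val_prec _ _ _ Hx Hg HT); destruct (as_atom A (L p a)); reflexivity.
Qed.

Lemma pointwise_comp a b p : theta (comp a b) p = pf_comp (theta a) (theta b) p.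
Proof.
  destruct (L_loc p) as [x [g [Hx [Hg HT]]]]; unfold pf_comp.
  rewrite (theta_def (comp a b)), (theta_def a), (val_comp _ _ _ Hx Hg HT).
  destruct (as_atom A (L p a)) as [w |]; [| reflexivity].
  simpl; rewrite theta_def, L_emb; reflexivity.
Qed.

Lemma pointwise_meet (th_meet : forall a b p, th (meet a b) p = pf_meet (th a) (th b) p) a b p :
  theta (meet a b) p = pf_meet (theta a) (theta b) p.
Proof.
  destruct (L_loc p) as [x [g [Hx [Hg HT]]]]; unfold pf_meet.
  rewrite !theta_def, (val_meet _ _ _ Hx Hg HT th_meet).
  destruct (as_atom A (L p a)) as [w1 |], (as_atom A (L p b)) as [w2 |]; try reflexivity.
  simpl; destruct (excluded_middle_informative (w1 = w2)) as [<- | Hne];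
    destruct (excluded_middle_informative (emb w1 = _)) as [E | E]; simpl; try reflexivity.
  - exfalso; exact (E eq_refl).
  - exfalso; exact (Hne (emb_inj w1 w2 E)).
Qed.

Lemma pointwise_upd (th_upd : forall a b p, th (upd a b) p = pf_upd (th a) (th b) p) a b p :
  theta (upd a b) p = pf_upd (theta a) (theta b) p.
Proof.
  destruct (L_loc p) as [x [g [Hx [Hg HT]]]]; unfold pf_upd.
  rewrite !theta_def, (val_upd _ _ _ Hx Hg HT th_upd).
  destruct (as_atom A (L p a)), (as_atom A (L p b)); reflexivity.
Qed.

Lemma pointwise_join (th_join : forall a b p, th (join a b) p = pf_join (th a) (th b) p) a b p :
  theta (join a b) p = pf_join (theta a) (theta b) p.
Proof.
  destruct (L_loc p) as [x [g [Hx [Hg HT]]]]; unfold pf_join.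
  rewrite !theta_def, (val_join _ _ _ Hx Hg HT th_join).
  destruct (as_atom A (L p a)); reflexivity.
Qed.

Lemma pointwise_join_complete :
  (forall p, reflects_nonzero_joins A (L p)) -> join_complete A theta.
Proof.
  intros HJ S j Hj p y; destruct (L_loc p) as [x [g [Hx [Hg HT]]]].
  pose proof (val_join_complete _ _ _ Hx Hg HT (HJ p) S j Hj) as Hval.
  rewrite theta_def; split.
  - destruct (as_atom A (L p j)) as [w |]; intros Hy; [| discriminate].
    destruct (proj1 (Hval w) eq_refl) as [s [Hs Es]]; exists s; split; [exact Hs |].
    rewrite theta_def, Es; exact Hy.
  - intros [s [Hs Hy]]; rewrite theta_def in Hy.
    destruct (as_atom A (L p s)) as [w |] eqn:Es; [| discriminate].
    rewrite (proj2 (Hval w) (ex_intro _ s (conj Hs Es))); exact Hy.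
Qed.

Lemma pointwise_meet_complete :
  (forall p, preserves_constant_meets A (L p)) -> meet_complete A theta.
Proof.
  intros HM S m Hne Hm p y; destruct (L_loc p) as [x [g [Hx [Hg HT]]]].
  pose proof (val_meet_complete _ _ _ Hx Hg HT (HM p) S m Hne Hm) as Hval.
  rewrite theta_def; split.
  - destruct (as_atom A (L p m)) as [w |]; intros Hy s Hs; [| discriminate].
    rewrite theta_def, (proj1 (Hval w) eq_refl s Hs); exact Hy.
  - intros Hy; destruct Hne as [s0 Hs0]; pose proof (Hy s0 Hs0) as Hy0.
    rewrite theta_def in Hy0; destruct (as_atom A (L p s0)) as [w |] eqn:E0; [| discriminate].
    rewrite (proj2 (Hval w)); [exact Hy0 |].
    (* all [s ∈ S] carry the same atom, since [emb] is injective *)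
    intros s Hs; specialize (Hy s Hs); rewrite theta_def in Hy.
    destruct (as_atom A (L p s)) as [w' |]; [| discriminate].
    simpl in Hy, Hy0; f_equal; apply emb_inj; congruence.
Qed.

Lemma pointwise_is_rep (sigma : sym -> Prop)
  (th_meet : sigma Meet -> forall a b p, th (meet a b) p = pf_meet (th a) (th b) p)
  (th_upd : sigma Upd -> forall a b p, th (upd a b) p = pf_upd (th a) (th b) p)
  (th_join : sigma Join -> forall a b p, th (join a b) p = pf_join (th a) (th b) p) :
  (forall a b, (forall p, theta a p = theta b p) -> a = b) ->
  (sigma Dom -> forall a p, theta (dom a) p = pf_dom (theta a) p) ->
  (sigma Antidom -> forall a p, theta (antidom a) p = pf_antidom (theta a) p) ->
  is_rep A sigma Y theta.
Proof.
  intros Hinj Hdom Hadom; repeat split; auto.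
  - intros _; exact pointwise_prec.
  - intros _; exact pointwise_comp.
  - intros H; exact (pointwise_meet (th_meet H)).
  - intros H; exact (pointwise_upd (th_upd H)).
  - intros H; exact (pointwise_join (th_join H)).
Qed.

End Pointwise.

(** ** The representation on [At(A) ⊔ At(A)/~] ([D], [A] ∉ σ) *)

Definition class_of (c : car A) (Hc : atom A c) : AtQ A :=
  exist (fun C => exists x, atom A x /\ forall y, C y <-> (atom A y /\ sim A x y))
        (fun y => atom A y /\ sim A c y) (ex_intro _ c (conj Hc (fun y => iff_refl _))).

Lemma rep_spec (C : AtQ A) :
  atom A (rep A C) /\ forall y, proj1_sig C y <-> atom A y /\ sim A (rep A C) y.
Proof.
  unfold rep; destruct (constructive_indefinite_description _ (proj2_sig C)) as [r Hr].
  exact Hr.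
Qed.

Lemma rep_class_sim c (Hc : atom A c) : sim A (rep A (class_of c Hc)) c.
Proof.
  apply (proj2 (rep_spec (class_of c Hc)) c); simpl.
  split; [exact Hc | apply sim_equiv].
Qed.

Definition theta1_loc (p : At A + AtQ A) : car A -> car A :=
  match p with inl x => comp (proj1_sig x) | inr C => lhd A (rep A C) end.

Lemma theta1_pointwise a p : theta1 A a p = opt_map inl (as_atom A (theta1_loc p a)).
Proof. destruct p; reflexivity. Qed.

Lemma theta1_loc_localization p : localization (theta1_loc p).
Proof.
  destruct p as [x | C]; [apply comp_localization, proj2_sig | apply lhd_localization, rep_spec].
Qed.

(** The point [c/~] alone determines [c ◁ a]. *)
Lemma theta1_injective : atoms_separating A ->
  forall a b, (forall p, theta1 A a p = theta1 A b p) -> a = b.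
Proof.
  intros Hsep; apply separation_injective; [exact Hsep |]; intros c Hc.
  exists (inr (class_of c Hc)); intros a b E; simpl in E.
  rewrite !(lhd_sim _ _ (rep_class_sim c Hc)) in E.
  destruct (as_atom A (lhd A c a)), (as_atom A (lhd A c b)); simpl in E; congruence.
Qed.

Lemma theta1_properties (sigma : sym -> Prop)
  (th_meet : sigma Meet -> forall a b p, th (meet a b) p = pf_meet (th a) (th b) p)
  (th_upd : sigma Upd -> forall a b p, th (upd a b) p = pf_upd (th a) (th b) p)
  (th_join : sigma Join -> forall a b p, th (join a b) p = pf_join (th a) (th b) p) :
  atoms_separating A -> ~ sigma Dom -> ~ sigma Antidom ->
  is_rep A sigma _ (theta1 A) /\
  (comp_cld_joins A -> join_complete A (theta1 A)) /\
  (comp_cld_meets A -> meet_complete A (theta1 A)).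
Proof.
  intros Hsep HnD HnA.
  assert (inl_inj : forall w1 w2 : At A, @inl _ (AtQ A) w1 = inl w2 -> w1 = w2)
    by (intros w1 w2 E; injection E; auto).
  pose proof (fun w a => eq_refl : theta1_loc (inl w) a = comp (proj1_sig w) a) as L_emb.
  split; [| split].
  - apply (pointwise_is_rep _ _ _ _ inl_inj theta1_loc_localization L_emb theta1_pointwise
             sigma th_meet th_upd th_join (theta1_injective Hsep)); contradiction.
  - intros Hcld; apply (pointwise_join_complete _ _ _ _ theta1_loc_localization theta1_pointwise).
    intros [x | C]; [exact (comp_reflects_nonzero_joins _ Hcld) | apply lhd_reflects_nonzero_joins].
  - intros Hcld; apply (pointwise_meet_complete _ _ _ _ inl_inj theta1_loc_localization
                          theta1_pointwise).
    intros [x | C]; [exact (comp_preserves_constant_meets _ Hcld) | apply lhd_preserves_constant_meets].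
Qed.

(** ** The representation on [At(A)] ([D] ∈ σ or [A] ∈ σ) *)

(** With [D] (or [A], via [D = A ∘ A]) every element has a domain element,
    which turns [c ◁ _] into a composition [D(c) ; _]. *)
Lemma domain_elements (sigma : sym -> Prop)
  (th_dom : sigma Dom -> forall a p, th (dom a) p = pf_dom (th a) p)
  (th_adom : sigma Antidom -> forall a p, th (antidom a) p = pf_antidom (th a) p) :
  sigma Dom \/ sigma Antidom -> forall c, exists d, forall p, th d p = dom_id c p.
Proof.
  intros [HD | HA] c.
  - exists (dom c); intro p; rewrite (th_dom HD); reflexivity.
  - exists (antidom (antidom c)); intro p; rewrite (th_adom HA); unfold pf_antidom.
    rewrite (th_adom HA); unfold pf_antidom, dom_id; destruct (th c p); reflexivity.
Qed.

Lemma comp_dom_id c d : (forall p, th d p = dom_id c p) -> forall a, comp d a = lhd A c a.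
Proof.
  intros Hd a; apply th_inj; intro p; rewrite th_comp, lhd_th; unfold pf_comp.
  rewrite Hd; unfold dom_id; destruct (th c p); reflexivity.
Qed.

Lemma theta2_pointwise a x : theta2 A a x = opt_map (fun w => w) (as_atom A (comp (proj1_sig x) a)).
Proof. unfold theta2; destruct (as_atom A _); reflexivity. Qed.

(** The point [D(c)] alone determines [c ◁ a]. *)
Lemma theta2_injective : atoms_separating A -> (forall c, exists d, forall p, th d p = dom_id c p) ->
  forall a b, (forall x, theta2 A a x = theta2 A b x) -> a = b.
Proof.
  intros Hsep Hdom; apply separation_injective; [exact Hsep |]; intros c Hc.
  destruct (Hdom c) as [d Hd].
  assert (Hd_atom : atom A d).
  { apply (atom_of_subdomain c d Hc).
    - intro Hz; apply (proj1 Hc), zero_iff; intro p; rewrite zero_iff in Hz; specialize (Hz p).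
      rewrite Hd in Hz; unfold dom_id in Hz; destruct (th c p); congruence.
    - intro p; rewrite Hd; unfold dom_id; destruct (th c p); congruence. }
  exists (exist _ d Hd_atom); intros a b E; unfold theta2 in E; simpl in E.
  rewrite !(comp_dom_id c d Hd) in E; exact E.
Qed.

(** At an atom [x], [x ; D(a)] is [x] when [x ; a ≠ 0] and [0] otherwise,
    and dually for [A(a)]. *)
Lemma theta2_dom (th_dom : forall a p, th (dom a) p = pf_dom (th a) p) a x :
  theta2 A (dom a) x = pf_dom (theta2 A a) x.
Proof.
  destruct x as [x Hx]; unfold theta2, pf_dom; simpl.
  pose proof (val_Some (comp x) x (th x) Hx (fun _ => iff_refl _) (th_comp x) a) as Hdef.
  pose proof (val_None (comp x) x (th x) Hx (fun _ => iff_refl _) (th_comp x) a) as Hundef.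
  destruct (as_atom A (comp x a)) as [w |].
  - transitivity (as_atom A x); [f_equal | exact (as_atom_self A (exist _ x Hx))].
    apply th_inj; intro p; rewrite th_comp; unfold pf_comp.
    destruct (th x p) as [q |] eqn:Eq; [| reflexivity].
    rewrite th_dom; unfold pf_dom; pose proof (proj2 (Hdef w eq_refl) p q Eq).
    destruct (th a q); congruence.
  - apply (val_undef (comp x) (th x) (th_comp x)); intros p q Eq.
    rewrite th_dom; unfold pf_dom; rewrite (Hundef eq_refl p q Eq); reflexivity.
Qed.

Lemma theta2_antidom (th_adom : forall a p, th (antidom a) p = pf_antidom (th a) p) a x :
  theta2 A (antidom a) x = pf_antidom (theta2 A a) x.
Proof.
  destruct x as [x Hx]; unfold theta2, pf_antidom; simpl.
  pose proof (val_Some (comp x) x (th x) Hx (fun _ => iff_refl _) (th_comp x) a) as Hdef.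
  pose proof (val_None (comp x) x (th x) Hx (fun _ => iff_refl _) (th_comp x) a) as Hundef.
  destruct (as_atom A (comp x a)) as [w |].
  - apply (val_undef (comp x) (th x) (th_comp x)); intros p q Eq.
    rewrite th_adom; unfold pf_antidom; pose proof (proj2 (Hdef w eq_refl) p q Eq).
    destruct (th a q); congruence.
  - transitivity (as_atom A x); [f_equal | exact (as_atom_self A (exist _ x Hx))].
    apply th_inj; intro p; rewrite th_comp; unfold pf_comp.
    destruct (th x p) as [q |] eqn:Eq; [| reflexivity].
    rewrite th_adom; unfold pf_antidom; rewrite (Hundef eq_refl p q Eq); reflexivity.
Qed.

Lemma theta2_properties (sigma : sym -> Prop)
  (th_meet : sigma Meet -> forall a b p, th (meet a b) p = pf_meet (th a) (th b) p)
  (th_upd : sigma Upd -> forall a b p, th (upd a b) p = pf_upd (th a) (th b) p)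
  (th_join : sigma Join -> forall a b p, th (join a b) p = pf_join (th a) (th b) p)
  (th_dom : sigma Dom -> forall a p, th (dom a) p = pf_dom (th a) p)
  (th_adom : sigma Antidom -> forall a p, th (antidom a) p = pf_antidom (th a) p) :
  atoms_separating A -> sigma Dom \/ sigma Antidom ->
  is_rep A sigma _ (theta2 A) /\
  (comp_cld_joins A -> join_complete A (theta2 A)) /\
  (comp_cld_meets A -> meet_complete A (theta2 A)).
Proof.
  intros Hsep HDA.
  pose proof (fun (w1 w2 : At A) (E : w1 = w2) => E) as id_inj.
  pose proof (fun x : At A => comp_localization _ (proj2_sig x)) as L_loc.
  pose proof (fun (w : At A) a => eq_refl : comp (proj1_sig w) a = comp (proj1_sig w) a) as L_emb.
  split; [| split].
  - apply (pointwise_is_rep _ _ _ _ id_inj L_loc L_emb theta2_pointwise sigma th_meet th_upd th_join).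
    + exact (theta2_injective Hsep (domain_elements sigma th_dom th_adom HDA)).
    + intros H; exact (theta2_dom (th_dom H)).
    + intros H; exact (theta2_antidom (th_adom H)).
  - intros Hcld; apply (pointwise_join_complete _ _ _ _ L_loc theta2_pointwise).
    intro x; exact (comp_reflects_nonzero_joins _ Hcld).
  - intros Hcld; apply (pointwise_meet_complete _ _ _ _ id_inj L_loc theta2_pointwise).
    intro x; exact (comp_preserves_constant_meets _ Hcld).
Qed.

End Representation.

Theorem proposition6p1 :
  forall (A : alg) (sigma : sym -> Prop),
    sigma Prec -> sigma Comp ->
    representable A sigma ->
    atoms_separating A ->
    (* ~ is an equivalence relation *)
    Equivalence (sim A) /\
    (* well-definedness: values are atoms (or 0) ... *)
    (forall a x : car A, atom A x -> is_zero A (comp x a) \/ atom A (comp x a)) /\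
    (forall a x : car A, atom A x -> is_zero A (lhd A x a) \/ atom A (lhd A x a)) /\
    (* ... and x ◁ a does not depend on the representative of x/~ *)
    (forall a x y : car A, atom A x -> atom A y -> sim A x y -> lhd A x a = lhd A y a) /\
    ((~ sigma Dom /\ ~ sigma Antidom) ->
       is_rep A sigma _ (theta1 A) /\
       (comp_cld_joins A -> join_complete A (theta1 A)) /\
       (comp_cld_meets A -> meet_complete A (theta1 A))) /\
    ((sigma Dom \/ sigma Antidom) ->
       is_rep A sigma _ (theta2 A) /\
       (comp_cld_joins A -> join_complete A (theta2 A)) /\
       (comp_cld_meets A -> meet_complete A (theta2 A))).
Proof.
  intros A sigma HP HC [X [th [th_inj [th_prec [th_comp Hops]]]]] Hsep.
  destruct Hops as [th_meet [th_upd [th_join [th_dom th_adom]]]].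
  specialize (th_prec HP); specialize (th_comp HC).
  split; [| split; [| split; [| split; [| split]]]].
  - exact (sim_equiv A X th th_inj th_prec).
  - intros a x Hx; apply (localization_atom_or_zero A X th th_inj th_prec).
    exact (comp_localization A X th th_comp x Hx).
  - intros a x Hx; apply (localization_atom_or_zero A X th th_inj th_prec).
    exact (lhd_localization A X th th_prec x Hx).
  - intros a x y _ _ Hxy; exact (lhd_sim A X th th_inj th_prec x y Hxy a).
  - intros [HnD HnA].
    exact (theta1_properties A X th th_inj th_prec th_comp sigma th_meet th_upd th_join
             Hsep HnD HnA).
  - intros HDA.
    exact (theta2_properties A X th th_inj th_prec th_comp sigma th_meet th_upd th_join
             th_dom th_adom Hsep HDA).
Qed.
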